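(* Let $G$ be a simple 2-connected plane graph whose unbounded face $p_\infty$ has $V_\infty$ vertices. Let $(a,b)$ be an admissible state such that (1) there is a bounded face $p$ and an edge $vv'$ lying on the boundary of both $p$ and $p_\infty$ with $b_v=b_{v'}=0$ and $(b_v-b_p)(b_{v'}-b_p)=1$; (2) $a_{p'}+b_{p'}=0$ for every bounded face $p'$; (3) $(b_{v_1}-b_{p'})(b_{v_2}-b_{p'})=0$ for every bounded face $p'$ and every edge $v_1v_2$ of $p'$ that does not lie on the boundary of $p_\infty$. Then $b_w\ge-1$ for every vertex $w$, $a_{p'}=1$ for every bounded face $p'$, and $B(a,b)\ge V_\infty-2$. Moreover $B(a,b)=V_\infty-2$ if and only if $b_w=0$ for every vertex $w$ on $p_\infty$, $b_w=-1$ for every other vertex $w$, and $a_{p'}=1$ for every bounded face $p'$.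
   Context: A simple 2-connected plane graph $G$ is a simple 2-connected planar graph with a fixed embedding in the plane, so every face is bounded by a cycle. For a face $p$, $l(p)$ is the number of edges on its boundary and $v\in p$ means $v$ lies on the boundary of $p$. An admissible state $(a,b)$ assigns an integer $a_p$ to each bounded face $p$ and an integer $b_v$ to each vertex $v$ such that $a_p+b_v\ge 0$ whenever $p$ is bounded and $v\in p$, and $b_v\ge0$ for every vertex $v$ on $p_\infty$. For a bounded face $p$, $b_p=\min_{v\in p}b_v$. $B(a,b)=2\sum_{v}b_v+\sum_p (l(p)-2)a_p$, with $p$ over bounded faces and $v$ over all vertices. *)

(* Plane graphs are encoded as combinatorial maps
   (rotation systems) of genus 0. *)
From HB Require Import structures.
From mathcomp Require Import all_boot all_order all_algebra.
Set Implicit Arguments. Unset Strict Implicit. Unset Printing Implicit Defensive.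
Import Order.TTheory GRing.Theory Num.Theory.

(* A connected plane graph, given as a combinatorial map:
   - darts = oriented edges; [alpha] reverses a dart (fixed-point-free involution);
   - [sigma] is the rotation of darts around their tail vertex (a permutation);
   - vertices are the sigma-orbits (named by [vert]),
   - faces are the orbits of the face permutation [sigma \o alpha] (named by [fc]);
     the dart x (from vert x to vert (alpha x)) is a boundary edge of face fc x;
   - [outer] is the unbounded face p_infinity;
   - Euler's formula V - E + F = 2 expresses that the embedding is in the
     plane (sphere). *)
Record plane_graph := PlaneGraph {
  dart : finType;
  vertex : finType;
  face : finType;
  alpha : dart -> dart;
  sigma : dart -> dart;
  vert : dart -> vertex;
  fc : dart -> face;
  outer : face;
  alphaK : forall x, alpha (alpha x) = x;
  alpha_nofix : forall x, alpha x != x;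
  sigma_inj : injective sigma;
  vertE : forall x y, (vert x == vert y) = fconnect sigma x y;
  vert_surj : forall v, exists x, vert x = v;
  fcE : forall x y, (fc x == fc y) = fconnect (fun z => sigma (alpha z)) x y;
  fc_surj : forall p, exists x, fc x = p;
  euler : #|vertex| + #|face| = #|dart| %/ 2 + 2
}.

Section Defs.
Variable G : plane_graph.

Definition adj (u v : vertex G) : bool :=
  [exists x : dart G, (vert x == u) && (vert (alpha x) == v)].

Definition simple_graph : Prop :=
  (forall x : dart G, vert (alpha x) != vert x) /\
  (forall x y : dart G, vert x = vert y -> vert (alpha x) = vert (alpha y) -> x = y).

Definition two_connected : Prop :=
  2 < #|vertex G| /\
  forall w u v : vertex G, u != w -> v != w ->
    connect [rel s t | adj s t && (s != w) && (t != w)] u v.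

Definition on_face (v : vertex G) (p : face G) : bool :=
  [exists x : dart G, (fc x == p) && (vert x == v)].

Definition edge_on (v1 v2 : vertex G) (p : face G) : bool :=
  [exists x : dart G, (fc x == p) &&
     (((vert x == v1) && (vert (alpha x) == v2)) ||
      ((vert x == v2) && (vert (alpha x) == v1)))].

Definition bounded (p : face G) : bool := p != outer G.

Definition flen (p : face G) : nat := #|[set x : dart G | fc x == p]|.

Definition Vinf : nat := #|[set v : vertex G | on_face v (outer G)]|.

Local Open Scope ring_scope.

Definition minl (s : seq int) : int := foldr Order.min (head 0 s) s.

Definition bface (b : vertex G -> int) (p : face G) : int :=
  minl [seq b v | v <- enum (vertex G) & on_face v p].

Definition admissible (a : face G -> int) (b : vertex G -> int) : Prop :=
  (forall p v, bounded p -> on_face v p -> 0 <= a p + b v) /\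
  (forall v, on_face v (outer G) -> 0 <= b v).

Definition Bval (a : face G -> int) (b : vertex G -> int) : int :=
  2 * \sum_(v : vertex G) b v +
  \sum_(p : face G | bounded p) ((flen p)%:Z - 2) * a p.

End Defs.

From HB Require Import structures.
From mathcomp Require Import all_boot all_order all_algebra all_fingroup zify ring.
Import Order.TTheory GRing.Theory Num.Theory.
Set Implicit Arguments. Unset Strict Implicit. Unset Printing Implicit Defensive.

(* The geometric input is that in a simple 2-connected plane graph every vertex
   occurs at most once on the boundary of each face (face_vertex_once).  We
   derive it from Euler's formula: if two distinct darts shared a vertex and a
   face, splitting that vertex would give a connected map with one more vertex
   and one more face, violating Euler's inequality for a pair of permutations
   (perm_euler), proved by induction on the number of cycles.

   With this, call a bounded face tight when the minimum of b on it is -1.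
   Hypothesis (1) makes the face p tight, hypothesis (3) propagates tightness
   across inner edges and around vertices (the outer face occurs only once
   around each vertex), and connectivity makes every bounded face tight.
   Hence a = 1 on bounded faces by (2), b >= -1 everywhere, and Euler's
   formula turns B(a, b) - (V_inf - 2) into twice a sum of nonnegative
   vertex excesses, which vanishes exactly in the extremal configuration. *)

Lemma card_imset_factor (A B C : finType) (S : {pred A}) (f : A -> B) (g : A -> C) :
  {in S &, forall u w, g u = g w -> f u = f w} -> #|f @: S| <= #|g @: S|.
Proof.
move=> fg; pose h c := omap f [pick z in S | g z == c].
rewrite -(card_imset _ (@Some_inj _)); apply: leq_trans (leq_imset_card h _).
apply/subset_leq_card/subsetP=> _ /imsetP[_ /imsetP[u uS ->] ->].
apply/imsetP; exists (g u); first exact: imset_f.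
rewrite /h; case: pickP => [z /andP[zS /eqP gz]|/(_ u)]; last by rewrite uS eqxx.
by rewrite /= (fg z u).
Qed.

Lemma connect_forward (T : finType) (e : rel T) (P : pred T) :
  (forall u w, e u w -> P u -> P w) -> forall u w, connect e u w -> P u -> P w.
Proof.
move=> eP u w /connectP[p + ->]; elim: p u => //= v p IH u /andP[uv vp] Pu.
exact: IH vp (eP _ _ uv Pu).
Qed.

Section PermutationEuler.
Variable T : finType.
Implicit Types (a b s : {perm T}) (x y z u w : T).

Lemma porbits_tperm_le s x y : #|porbits (tperm x y * s)| <= (#|porbits s|).+1.
Proof. by have := porbits_mul_tperm s x y; case: (x != y) => /=; lia. Qed.

Lemma porbits_tperm_join s x y :
  x \notin porbit s y -> (#|porbits (tperm x y * s)|).+1 = #|porbits s|.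
Proof.
move=> xNy; have xy : x != y by apply: contraNneq xNy => ->; exact: porbit_id.
by have := porbits_mul_tperm s x y; rewrite xNy xy /=; lia.
Qed.

Lemma porbits_tperm_split s x y :
  x != y -> x \in porbit s y -> #|porbits (tperm x y * s)| = (#|porbits s|).+1.
Proof. by move=> xy xs; have := porbits_mul_tperm s x y; rewrite xs xy /=; lia. Qed.

Lemma porbits_tperm_split_r s x y :
  x != y -> x \in porbit s y -> #|porbits (s * tperm x y)| = (#|porbits s|).+1.
Proof.
move=> xy xs; rewrite -porbitsV invMg tpermV porbits_tperm_split ?porbitV //.
by rewrite porbitsV.
Qed.

Lemma porbit_succ s z u : (s u \in porbit s z) = (u \in porbit s z).
Proof. by rewrite -!eq_porbit_mem -(porbit_perm s 1 u) expg1. Qed.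

Definition perm_edge a b : rel T :=
  fun u w => [|| w == a u, u == a w, w == b u | u == b w].

Lemma perm_edge_sym a b : symmetric (perm_edge a b).
Proof.
move=> u w; rewrite /perm_edge.
by case: (w == a u) (u == a w) (w == b u) (u == b w) => [] [] [] [].
Qed.

Let edge_csym a b : connect_sym (perm_edge a b) := sym_connect_sym (perm_edge_sym a b).

Definition perm_comp a b z : {set T} := [set w | connect (perm_edge a b) z w].
Definition n_perm_comp a b : nat := #|[set perm_comp a b z | z : T]|.

Lemma perm_comp_eq a b z w :
  connect (perm_edge a b) z w -> perm_comp a b z = perm_comp a b w.
Proof.
move=> zw; apply/setP=> u; rewrite !inE; apply/idP/idP; last exact: connect_trans.
by apply: connect_trans; rewrite edge_csym.
Qed.

Lemma porbit_connect a b z w : w \in porbit b z -> connect (perm_edge a b) z w.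
Proof.
case/porbitP=> i ->; rewrite permX; elim: i => [|i IH] /=; first exact: connect0.
by apply: connect_trans IH (connect1 _); rewrite /perm_edge eqxx !orbT.
Qed.

Lemma porbitM_connect a b z w : w \in porbit (a * b) z -> connect (perm_edge a b) z w.
Proof.
case/porbitP=> i ->; rewrite permX; elim: i => [|i IH] /=; first exact: connect0.
apply: connect_trans IH _; rewrite permM; set u := iter i _ z.
have ua : perm_edge a b u (a u) by rewrite /perm_edge eqxx.
have ub : perm_edge a b (a u) (b (a u)) by rewrite /perm_edge eqxx !orbT.
exact: connect_trans (connect1 ua) (connect1 ub).
Qed.

Lemma perm_comp1 b z : perm_comp 1 b z = porbit b z.
Proof.
apply/setP=> w; rewrite inE; apply/idP/idP; last exact: porbit_connect.
have closed_orbit : closed (perm_edge 1 b) (porbit b z).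
  by move=> u v; rewrite /perm_edge !perm1 => /or4P[] /eqP ->; rewrite ?porbit_succ.
by move/(closed_connect closed_orbit); rewrite porbit_id.
Qed.

Lemma n_perm_comp1 b : n_perm_comp 1 b = #|porbits b|.
Proof. by rewrite /n_perm_comp (eq_imset _ (perm_comp1 b)). Qed.

Lemma porbit_fconnect s x y : (y \in porbit s x) = fconnect s x y.
Proof.
apply/idP/idP; first by case/porbitP=> i ->; rewrite permX fconnect_iter.
by move/iter_findex <-; rewrite -permX mem_porbit.
Qed.

Lemma sum_card_porbits s : \sum_(A in porbits s) #|A| = #|T|.
Proof.
rewrite -cardsT -(acts_sum_card_orbit (to := perm_action T) (G := <[s]>%g)).
  rewrite /porbits -porbitE; apply: eq_bigl => A.
  by apply/imsetP/imsetP => -[z _ ->]; exists z.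
by apply/actsP => c _ z; rewrite !inE.
Qed.

Lemma porbits_le s : #|porbits s| <= #|T|.
Proof. exact: leq_imset_card. Qed.

Lemma porbits1 : #|porbits (1 : {perm T})| = #|T|.
Proof.
rewrite card_imset // => u w e.
have : w \in porbit 1 u by rewrite e porbit_id.
by case/porbitP=> i ->; rewrite expg1n perm1.
Qed.

(* Splitting the cycle of [a] through [x]: a' = (x, a x) * a has one more
   cycle than [a], and the graph of (a', b) is the graph of (a, b) with the
   edge between x and a x removed, up to connectivity. *)
Section SplitCycle.
Variables (a b : {perm T}) (x : T).
Hypothesis ax : a x != x.
Let y := a x.
Let a' := (tperm x y * a)%g.
Let r := perm_edge a b.
Let r' := perm_edge a' b.

Lemma split_permE u : a' u = if u == x then a y else if u == y then y else a u.
Proof.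
rewrite permM; case: tpermP => [->|->|/eqP/negbTE-> /eqP/negbTE->]; rewrite ?eqxx //.
by rewrite /y (negbTE ax).
Qed.

Lemma porbits_split : #|porbits a'| = (#|porbits a|).+1.
Proof.
apply: porbits_tperm_split; first by rewrite eq_sym.
by rewrite porbit_sym; have := mem_porbit a 1 x; rewrite expg1.
Qed.

Lemma split_connect u w : connect r' u w -> connect r u w.
Proof.
apply: connect_sub => {}u {}w.
have a'_step v : connect r v (a' v).
  rewrite split_permE; case: eqP => [->|_].
    have xy : r x y by rewrite /r /perm_edge eqxx.
    have yay : r y (a y) by rewrite /r /perm_edge eqxx.
    exact: connect_trans (connect1 xy) (connect1 yay).
  case: eqP => [->|_]; first exact: connect0.
  by apply: connect1; rewrite /r /perm_edge eqxx.
case/or4P=> /eqP->; [exact: a'_step | by rewrite edge_csym | |];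
  by apply: connect1; rewrite /r /perm_edge eqxx !orbT.
Qed.

(* Conversely, a path of the original graph is a path of the split graph,
   or crosses once between the two ends x and y of the removed edge. *)
Definition glued u w := [|| connect r' u w,
  connect r' u x && connect r' w y | connect r' u y && connect r' w x].

Lemma glued_sym u w : glued u w -> glued w u.
Proof.
rewrite /glued (edge_csym a' b u w).
by case/or3P=> [->|/andP[->->]|/andP[->->]]; rewrite ?orbT.
Qed.

Lemma glued_trans u v w : glued u v -> glued v w -> glued u w.
Proof.
have sym p q : connect r' p q -> connect r' q p by rewrite edge_csym.
rewrite /glued => /or3P[uv|/andP[ux vy]|/andP[uy vx]]
  /or3P[vw|/andP[vx' wy]|/andP[vy' wx]]; apply/or3P.
- by apply: Or31; apply: connect_trans uv vw.
- by apply: Or32; rewrite (connect_trans uv vx') wy.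
- by apply: Or33; rewrite (connect_trans uv vy') wx.
- by apply: Or32; rewrite ux (connect_trans (sym _ _ vw) vy).
- by apply: Or32; rewrite ux wy.
- by apply: Or31; apply: connect_trans ux (sym _ _ wx).
- by apply: Or33; rewrite uy (connect_trans (sym _ _ vw) vx).
- by apply: Or31; apply: connect_trans uy (sym _ _ wy).
- by apply: Or33; rewrite uy wx.
Qed.

Lemma glued_edge u w : r u w -> glued u w.
Proof.
have a_step v : glued v (a v).
  rewrite /glued; case: (eqVneq v x) => [->|vx].
    by rewrite !connect0 orbT.
  case: (eqVneq v y) => [->|vy].
    have xay : r' x (a y) by rewrite /r' /perm_edge split_permE !eqxx.
    by apply/or3P; apply: Or33; rewrite connect0 edge_csym connect1.
  by rewrite connect1 // /r' /perm_edge split_permE (negbTE vx) (negbTE vy) eqxx.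
have b_step v w' : w' = b v -> glued v w'.
  by move=> ->; rewrite /glued connect1 // /r' /perm_edge eqxx !orbT.
case/or4P=> /eqP->; [exact: a_step | exact: glued_sym (a_step _) | exact: b_step |].
exact: glued_sym (b_step _ _ erefl).
Qed.

Lemma connect_glued u w : connect r u w -> glued u w.
Proof.
case/connectP=> p + ->; elim: p u => [|v p IH] u /=.
  by move=> _; rewrite /glued connect0.
by case/andP=> uv vp; apply: glued_trans (glued_edge uv) (IH _ vp).
Qed.

Lemma n_perm_comp_split_same : connect r' x y -> n_perm_comp a' b = n_perm_comp a b.
Proof.
move=> xy; rewrite /n_perm_comp; congr #|pred_of_set _|; apply: eq_imset => z.
apply/setP=> w; rewrite !inE; apply/idP/idP; first exact: split_connect.
case/connect_glued/or3P=> [//|/andP[zx wy]|/andP[zy wx]].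
  by apply: connect_trans zx (connect_trans xy _); rewrite edge_csym.
have yx : connect r' y x by rewrite edge_csym.
by apply: connect_trans zy (connect_trans yx _); rewrite edge_csym.
Qed.

Lemma n_perm_comp_split_le : n_perm_comp a' b <= (n_perm_comp a b).+1.
Proof.
pose U := [set z | ~~ connect r' z y].
have sub : [set perm_comp a' b z | z : T] \subset
           perm_comp a' b @: U :|: [set perm_comp a' b y].
  apply/subsetP=> _ /imsetP[z _ ->]; rewrite inE.
  case: (boolP (connect r' z y)) => zy; first by rewrite (perm_comp_eq zy) set11 orbT.
  by rewrite imset_f // inE.
apply: leq_trans (subset_leq_card sub) _.
rewrite (leq_trans (leq_card_setU _ _)) // cards1 addn1 ltnS.
apply: (@leq_trans #|perm_comp a b @: U|); last exact/subset_leq_card/imsetS/subsetP.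
apply: card_imset_factor => u w; rewrite !inE => uNy wNy e.
have : w \in perm_comp a b u by rewrite e inE connect0.
rewrite inE => /connect_glued/or3P[uw|/andP[_ wy]|/andP[uy _]].
- exact: perm_comp_eq.
- by rewrite wy in wNy.
- by rewrite uy in uNy.
Qed.

Lemma euler_split :
  #|porbits a'| + #|porbits b| + #|porbits (a' * b)| <= #|T| + 2 * n_perm_comp a' b ->
  #|porbits a| + #|porbits b| + #|porbits (a * b)| <= #|T| + 2 * n_perm_comp a b.
Proof.
move=> euler_a'; have split_a := porbits_split.
have -> : (a * b = tperm x y * (a' * b))%g by rewrite /a' !mulgA tperm2 mul1g.
case: (boolP (connect r' x y)) => xy.
  have := porbits_tperm_le (a' * b) x y; have := n_perm_comp_split_same xy; lia.
have xNy : x \notin porbit (a' * b) y.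
  by apply: contra xy => /porbitM_connect; rewrite edge_csym.
have := porbits_tperm_join xNy; have := n_perm_comp_split_le; lia.
Qed.
End SplitCycle.

(* Euler's inequality for a pair of permutations (genus >= 0 for each component
   of the hypermap (a, b)): cycles(a) + cycles(b) + cycles(ab) <= |T| + 2 #components. *)
Theorem perm_euler a b :
  #|porbits a| + #|porbits b| + #|porbits (a * b)| <= #|T| + 2 * n_perm_comp a b.
Proof.
have [n] := ubnP (#|T| - #|porbits a|); elim: n a => // n IH a.
case: (eqVneq a 1%g) => [-> _|a_ne1 lt_n]; first by rewrite porbits1 mul1g n_perm_comp1; lia.
have [x ax] : exists x, a x != x.
  apply/existsP; apply: contraR a_ne1 => /existsPn a1; apply/eqP/permP=> z.
  by rewrite perm1; apply/eqP/negbNE.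
apply: (euler_split ax); apply: IH.
have := porbits_split ax; have := porbits_le (tperm x (a x) * a); lia.
Qed.
End PermutationEuler.

Section PlaneMap.
Variable G : plane_graph.
Local Notation D := (dart G).

Lemma alpha_inj : injective (@alpha G).
Proof. exact: can_inj (@alphaK G). Qed.

Definition sigma_perm : {perm D} := perm (@sigma_inj G).
Definition alpha_perm : {perm D} := perm alpha_inj.
Definition face_perm : {perm D} := (alpha_perm * sigma_perm)%g.

Lemma vert_sigma (z : D) : vert (sigma z) = vert z.
Proof. by apply/eqP; rewrite eq_sym vertE fconnect1. Qed.

Lemma vert_iter_sigma n (z : D) : vert (iter n (@sigma G) z) = vert z.
Proof. by elim: n => //= n IH; rewrite vert_sigma. Qed.

Lemma fc_sigma_alpha (z : D) : fc (sigma (alpha z)) = fc z.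
Proof. by apply/eqP; rewrite eq_sym fcE fconnect1. Qed.

Lemma fc_sigma (z : D) : fc (sigma z) = fc (alpha z).
Proof. by rewrite -{1}(alphaK z) fc_sigma_alpha. Qed.

Lemma porbit_sigma (x y : D) : (y \in porbit sigma_perm x) = (vert x == vert y).
Proof.
by rewrite porbit_fconnect vertE; apply: eq_connect => u w; rewrite /sigma_perm /= permE.
Qed.

Lemma porbit_face (x y : D) : (y \in porbit face_perm x) = (fc x == fc y).
Proof.
rewrite porbit_fconnect fcE; apply: eq_connect => u w.
by rewrite /face_perm /= permM /alpha_perm /sigma_perm !permE.
Qed.

Lemma card_vertex_le : #|vertex G| <= #|porbits sigma_perm|.
Proof.
have onto : [set: vertex G] \subset (@vert G) @: D.
  by apply/subsetP=> v _; have [z <-] := vert_surj v; exact: imset_f.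
rewrite -cardsT (leq_trans (subset_leq_card onto)) //.
apply: card_imset_factor => u w _ _ e.
by apply/eqP; rewrite -porbit_sigma e porbit_id.
Qed.

Lemma card_face_le : #|face G| <= #|porbits face_perm|.
Proof.
have onto : [set: face G] \subset (@fc G) @: D.
  by apply/subsetP=> p _; have [z <-] := fc_surj p; exact: imset_f.
rewrite -cardsT (leq_trans (subset_leq_card onto)) //.
apply: card_imset_factor => u w _ _ e.
by apply/eqP; rewrite -porbit_face e porbit_id.
Qed.

Lemma porbit_alpha (z : D) : porbit alpha_perm z = [set z; alpha z].
Proof.
apply/setP=> w; rewrite !inE; apply/idP/idP.
  case/porbitP=> i ->; rewrite permX; elim: i => [|i IH] /=; first by rewrite eqxx.
  by case/orP: IH => /eqP->; rewrite /alpha_perm permE ?alphaK eqxx ?orbT.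
case/orP=> /eqP->; first exact: porbit_id.
by have := mem_porbit alpha_perm 1 z; rewrite expg1 /alpha_perm permE.
Qed.

Lemma card_dart : #|D| = 2 * #|porbits alpha_perm|.
Proof.
rewrite -(sum_card_porbits alpha_perm) mulnC -sum_nat_const; apply: eq_bigr => _ /imsetP[z _ ->].
by rewrite porbit_alpha cards2 eq_sym alpha_nofix.
Qed.

Lemma plane_cycles :
  #|D| + 2 <= #|porbits alpha_perm| + #|porbits sigma_perm| + #|porbits face_perm|.
Proof.
have := euler G; have := card_dart; have := card_vertex_le; have := card_face_le; lia.
Qed.

Hypothesis simpleG : simple_graph G.
Hypothesis connG : two_connected G.

Lemma vert_alpha_neq (z : D) : vert (alpha z) != vert z.
Proof. by case: simpleG. Qed.

Lemma third_vertex (u w : vertex G) : exists z, (z != u) && (z != w).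
Proof.
apply/existsP; apply: contraLR connG.1 => /existsPn uw; rewrite -leqNgt.
apply: leq_trans (_ : #|[set u; w]| <= 2); last by rewrite cards2; case: (u != w).
rewrite -cardsT; apply/subset_leq_card/subsetP=> z _; rewrite !inE.
by have := uw z; rewrite negb_and !negbK.
Qed.

Lemma adj_closed_all (P : pred (vertex G)) :
  (forall u t, adj u t -> P u -> P t) -> forall u w, P u -> P w.
Proof.
move=> P_adj u w; have [z /andP[zu zw]] := third_vertex u w.
have := connG.2 z u w; rewrite !(eq_sym _ z) => /(_ zu zw) uw Pu.
by apply: connect_forward uw Pu => s t /andP[/andP[st _] _]; exact: P_adj.
Qed.

Lemma two_darts (u : vertex G) : exists x y : D, [/\ x != y, vert x = u & vert y = u].
Proof.
have [x xu] := vert_surj u; set w := vert (alpha x).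
have uw : u != w by rewrite /w -xu eq_sym vert_alpha_neq.
have [z /andP[zu zw]] := third_vertex u w.
case: connG => _ /(_ w u z uw zw) /connectP[[|s p] /=]; first by move=> _ zu'; rewrite zu' eqxx in zu.
case/andP=> /andP[/andP[/existsP[y /andP[/eqP yu /eqP ys]] _] sw] _ _.
by exists x, y; split=> //; apply: contraNneq sw => xy; rewrite -ys -xy.
Qed.

(* Splitting the vertex of two distinct darts x, y lying on the same face
   yields a map with one more vertex and one more face; by 2-connectivity it
   stays connected, which contradicts Euler's inequality. *)
Section VertexSplit.
Variables x y : D.
Hypotheses (xy : x != y) (vxy : vert x = vert y) (fxy : fc x = fc y).
Let sigma' := (sigma_perm * tperm x y)%g.
Let r := perm_edge alpha_perm sigma'.

Lemma split_sigmaE (z : D) : vert z != vert x -> sigma' z = sigma z.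
Proof.
move=> zx; rewrite permM /sigma_perm permE tpermD //.
  by apply: contraNneq zx => ->; rewrite vert_sigma.
by apply: contraNneq zx => yz; rewrite vxy yz vert_sigma.
Qed.

Lemma split_connect_alpha (z : D) : connect r z (alpha z).
Proof. by apply: connect1; rewrite /r /perm_edge /alpha_perm permE eqxx. Qed.

Lemma split_connect_vertex (z w : D) :
  vert z != vert x -> vert z = vert w -> connect r z w.
Proof.
move=> zx /eqP; rewrite vertE => /iter_findex <-.
elim: (findex _ _ _) => [|n IH] /=; first exact: connect0.
apply: connect_trans IH (connect1 _).
by rewrite /r /perm_edge split_sigmaE ?vert_iter_sigma // eqxx !orbT.
Qed.

Lemma split_connected (z : D) : connect r x z.
Proof.
pose Q u := [forall w : D, (vert w == u) ==> connect r x w].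
have Q_alpha : Q (vert (alpha x)).
  apply/forallP=> w; apply/implyP=> /eqP wx.
  apply: connect_trans (split_connect_alpha x) (split_connect_vertex _ _) => //.
  exact: vert_alpha_neq.
have Q_step s t : [rel s t | adj s t && (s != vert x) && (t != vert x)] s t ->
    Q s -> Q t.
  case/andP=> /andP[/existsP[d /andP[/eqP ds /eqP dt]] _] tx /forallP Qs.
  apply/forallP=> w; apply/implyP=> /eqP wt.
  apply: connect_trans (implyP (Qs d) (introT eqP ds)) _.
  apply: connect_trans (split_connect_alpha d) (split_connect_vertex _ _).
    by rewrite dt.
  by rewrite dt wt.
have Q_all u : u != vert x -> Q u.
  move=> ux; have := connG.2 (vert x) _ u (vert_alpha_neq x) ux.
  by move/(connect_forward (P := Q) Q_step); apply.
have Q_vert (w : D) : vert w != vert x -> connect r x w.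
  by move=> wx; exact: implyP (forallP (Q_all _ wx) w) (eqxx _).
case: (eqVneq (vert z) (vert x)) => zx; last exact: Q_vert.
apply: connect_trans (Q_vert (alpha z) _) _; first by rewrite -zx vert_alpha_neq.
by rewrite (sym_connect_sym (@perm_edge_sym _ _ _)); exact: split_connect_alpha.
Qed.

Lemma vertex_split_false : False.
Proof.
have more_vertices : #|porbits sigma'| = (#|porbits sigma_perm|).+1.
  by apply: porbits_tperm_split_r => //; rewrite porbit_sym porbit_sigma vxy.
have more_faces : #|porbits (alpha_perm * sigma')| = (#|porbits face_perm|).+1.
  by rewrite mulgA; apply: porbits_tperm_split_r => //; rewrite porbit_sym porbit_face fxy.
have one_comp : n_perm_comp alpha_perm sigma' <= 1.
  rewrite /n_perm_comp -(cards1 (perm_comp alpha_perm sigma' x)).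
  apply/subset_leq_card/subsetP=> _ /imsetP[z _ ->].
  by rewrite inE (perm_comp_eq (split_connected z)).
have := perm_euler alpha_perm sigma'; have := plane_cycles; lia.
Qed.
End VertexSplit.

Theorem face_vertex_once (x y : D) : vert x = vert y -> fc x = fc y -> x = y.
Proof. by move=> vxy fxy; apply/eqP/negPn/negP => xy; exact: vertex_split_false xy vxy fxy. Qed.
End PlaneMap.

Lemma foldr_min_le (disp : Order.disp_t) (T : orderType disp) (x e : T) (s : seq T) :
  e \in s -> (foldr Order.min x s <= e)%O.
Proof.
elim: s => //= h t IH; rewrite inE => /orP[/eqP ->|/IH te]; rewrite ge_min ?lexx //.
by rewrite te orbT.
Qed.

Lemma sum_Posz (I : finType) (P : pred I) (F : I -> nat) :
  (\sum_(i | P i) Posz (F i))%R = Posz (\sum_(i | P i) F i)%N.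
Proof. by rewrite (big_morph Posz PoszD erefl). Qed.

Section FaceBoundary.
Variable G : plane_graph.
Local Notation D := (dart G).

Lemma on_face_dart (d : D) : on_face (vert d) (fc d).
Proof. by apply/existsP; exists d; rewrite !eqxx. Qed.

Lemma on_face_dart_alpha (d : D) : on_face (vert (alpha d)) (fc d).
Proof. by apply/existsP; exists (sigma (alpha d)); rewrite fc_sigma_alpha vert_sigma !eqxx. Qed.

Lemma bface_le (b : vertex G -> int) w p : on_face w p -> (bface b p <= b w)%R.
Proof. by move=> wp; apply: foldr_min_le; apply: map_f; rewrite mem_filter wp mem_enum. Qed.

Lemma sum_flen : (\sum_(p : face G) flen p = #|D|)%N.
Proof.
rewrite -sum1_card (partition_big (@fc G) predT) //=.
by apply: eq_bigr => p _; rewrite /flen -sum1dep_card.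
Qed.

Hypothesis simpleG : simple_graph G.
Hypothesis connG : two_connected G.

Lemma flen_outer : flen (outer G) = Vinf G.
Proof.
rewrite /Vinf /flen.
have -> : [set v | on_face v (outer G)] = (@vert G) @: [set x : D | fc x == outer G].
  apply/setP=> v; rewrite inE; apply/existsP/imsetP.
    by case=> x /andP[fx /eqP xv]; exists x; rewrite ?inE.
  by case=> x; rewrite inE => fx ->; exists x; rewrite fx eqxx.
rewrite card_in_imset // => x y; rewrite !inE => /eqP fx /eqP fy e.
by apply: (face_vertex_once simpleG connG e); rewrite fx fy.
Qed.

Lemma bounded_face_at (w : vertex G) : exists d : D, vert d = w /\ bounded (fc d).
Proof.
have [x [y [xy xw yw]]] := two_darts simpleG connG w.
case: (boolP (bounded (fc x))) => bx; first by exists x.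
exists y; split=> //; apply: contra xy => /eqP yo; apply/eqP.
by apply: (face_vertex_once simpleG connG); rewrite ?xw ?yw // (eqP (negPn bx)) yo.
Qed.

Lemma inner_edge (d : D) : bounded (fc d) -> bounded (fc (alpha d)) ->
  ~~ edge_on (vert d) (vert (alpha d)) (outer G).
Proof.
move=> bd bad; apply/existsP=> -[e /andP[/eqP eo]].
have [_ vert_inj] := simpleG.
case/orP=> /andP[/eqP ed /eqP ead].
  by move: bd; rewrite /bounded -(vert_inj _ _ ed ead) eo eqxx.
by move: bad; rewrite /bounded -(vert_inj e (alpha d) ed) ?alphaK // eo eqxx.
Qed.
End FaceBoundary.

(* Integer core of the propagation across an edge v1 v2 shared by two bounded
   faces: if the first face has minimum -1, so does the second one. *)
Lemma edge_min_transfer (u v m : int) :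
  (-1 <= u)%R -> (-1 <= v)%R -> (m <= u)%R -> (m <= v)%R ->
  ((u + 1) * (v + 1) = 0)%R -> ((u - m) * (v - m) = 0)%R -> m = (-1)%R.
Proof.
move=> u1 v1 mu mv /eqP; rewrite mulf_eq0 => /orP[] /eqP e1 /eqP;
  rewrite mulf_eq0 => /orP[] /eqP e2; lia.
Qed.

Section TightFaces.
Variable G : plane_graph.
Local Notation D := (dart G).
Variable b : vertex G -> int.
Hypothesis simpleG : simple_graph G.
Hypothesis connG : two_connected G.
Hypothesis edge_cond : forall (p' : face G) (v1 v2 : vertex G), bounded p' -> adj v1 v2 ->
  edge_on v1 v2 p' -> ~~ edge_on v1 v2 (outer G) ->
  ((b v1 - bface b p') * (b v2 - bface b p') = 0)%R.

Definition tight (p : face G) : bool := bounded p && (bface b p == -1)%R.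

Lemma tight_alpha (d : D) : bounded (fc d) -> bounded (fc (alpha d)) ->
  tight (fc d) -> tight (fc (alpha d)).
Proof.
move=> bd bad /andP[_ /eqP min_d]; rewrite /tight bad /=; apply/eqP.
set v1 := vert d; set v2 := vert (alpha d).
have e12 : adj v1 v2 by apply/existsP; exists d; rewrite !eqxx.
have on_d : edge_on v1 v2 (fc d) by apply/existsP; exists d; rewrite !eqxx.
have on_ad : edge_on v1 v2 (fc (alpha d)).
  by apply/existsP; exists (alpha d); rewrite alphaK !eqxx orbT.
have inner := inner_edge simpleG bd bad.
have := edge_cond bd e12 on_d inner; rewrite min_d !opprK => cond_d.
have cond_ad := edge_cond bad e12 on_ad inner.
apply: edge_min_transfer cond_d cond_ad.
- by rewrite -min_d bface_le ?on_face_dart.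
- by rewrite -min_d bface_le ?on_face_dart_alpha.
- by rewrite bface_le // /v1 -{1}(alphaK d) on_face_dart_alpha.
- by rewrite bface_le ?on_face_dart.
Qed.

Lemma tight_sigma (d : D) : bounded (fc d) -> bounded (fc (sigma d)) ->
  tight (fc d) = tight (fc (sigma d)).
Proof.
rewrite fc_sigma => bd bad; apply/idP/idP; first exact: tight_alpha.
by rewrite -{2}(alphaK d); apply: tight_alpha; rewrite ?alphaK.
Qed.

Lemma tight_iter k (d : D) : (forall j, j <= k -> bounded (fc (iter j (@sigma G) d))) ->
  tight (fc d) = tight (fc (iter k (@sigma G) d)).
Proof.
elim: k => [//|k IH] bk.
have -> : tight (fc d) = tight (fc (iter k (@sigma G) d)).
  by apply: IH => j jk; apply: bk; lia.
by apply: tight_sigma; [exact: bk (leqnSn k) | exact: bk (leqnn _)].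
Qed.

Lemma outer_once_around (z : D) i j :
  i < fingraph.order (@sigma G) z -> j < fingraph.order (@sigma G) z ->
  ~~ bounded (fc (iter i (@sigma G) z)) -> ~~ bounded (fc (iter j (@sigma G) z)) -> i = j.
Proof.
move=> iz jz /negPn/eqP oi /negPn/eqP oj.
have same : iter i (@sigma G) z = iter j (@sigma G) z.
  by apply: (face_vertex_once simpleG connG); rewrite ?vert_iter_sigma // oi oj.
by rewrite -(findex_iter iz) same findex_iter.
Qed.

(* All bounded faces around a vertex are tight as soon as one of them is:
   going around either way, one of the two arcs avoids the outer face. *)
Lemma tight_vertex (z0 z1 : D) : vert z0 = vert z1 -> tight (fc z0) ->
  bounded (fc z1) -> tight (fc z1).
Proof.
move=> /eqP; rewrite vertE => z01 t0 b1; have b0 : bounded (fc z0) by case/andP: t0.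
set n := fingraph.order (@sigma G) z0; set k := findex (@sigma G) z0 z1.
have kn : k < n by apply: findex_max.
have z1E : iter k (@sigma G) z0 = z1 by apply: iter_findex.
case: (boolP [exists i : 'I_k.+1, ~~ bounded (fc (iter i (@sigma G) z0))]); last first.
  move/existsPn=> fwd; rewrite -z1E -tight_iter // => i ik.
  by have := fwd (Ordinal (ik : i < k.+1)); rewrite negbK.
case/existsP=> -[i /= ik] oi.
case: (boolP [exists j : 'I_(n - k).+1, ~~ bounded (fc (iter j (@sigma G) z1))]); last first.
  move/existsPn=> bwd.
  have z0E : iter (n - k) (@sigma G) z1 = z0.
    by rewrite -z1E -iterD subnK ?(iter_order (@sigma_inj G)) //; exact: ltnW.
  have -> : tight (fc z1) = tight (fc z0).
    rewrite -z0E; apply: tight_iter => j jk.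
    by have := bwd (Ordinal (jk : j < (n - k).+1)); rewrite negbK.
  exact: t0.
case/existsP=> -[j /= jk]; rewrite -z1E -iterD => oj.
have j0 : j != 0 by apply: contraNneq oj => ->; rewrite add0n z1E.
have jkn : j + k != n.
  by apply: contraNneq oj => ->; rewrite (iter_order (@sigma_inj G)).
have := outer_once_around (_ : i < n) (_ : j + k < n) oi oj; lia.
Qed.

Definition tight_at (u : vertex G) : bool := [exists z : D, (vert z == u) && tight (fc z)].

Lemma tight_at_adj (u t : vertex G) : adj u t -> tight_at u -> tight_at t.
Proof.
case/existsP=> d /andP[/eqP du /eqP dt] /existsP[z /andP[/eqP zu tz]].
have zd : vert z = vert d by rewrite zu du.
case: (boolP (bounded (fc d))) => bd.
  apply/existsP; exists (sigma (alpha d)).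
  by rewrite vert_sigma dt fc_sigma_alpha eqxx (tight_vertex zd tz bd).
case: (boolP (bounded (fc (alpha d)))) => bad.
  apply/existsP; exists (alpha d); rewrite dt eqxx -fc_sigma /=.
  by apply: tight_vertex tz _; rewrite ?vert_sigma // fc_sigma.
have [x [y [xy xu yu]]] := two_darts simpleG connG u.
have sd : sigma d = d.
  apply: (face_vertex_once simpleG connG); first by rewrite vert_sigma.
  by rewrite fc_sigma (eqP (negPn bad)) (eqP (negPn bd)).
have at_d (w : D) : vert w = u -> w = d.
  move=> wu; have : fconnect (@sigma G) d w by rewrite -vertE du wu.
  move/iter_findex <-.
  by elim: (findex _ _ _) => //= m ->.
by move: xy; rewrite (at_d x xu) (at_d y yu) eqxx.
Qed.

Lemma all_tight (d0 : D) : tight (fc d0) -> forall p : face G, bounded p -> tight p.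
Proof.
move=> t0 p bp; have [d fd] := fc_surj p; rewrite -fd in bp *.
have /existsP[z /andP[/eqP zd tz]] : tight_at (vert d).
  apply: (adj_closed_all connG tight_at_adj (u := vert d0)).
  by apply/existsP; exists d0; rewrite eqxx t0.
exact: tight_vertex zd tz bp.
Qed.
End TightFaces.

Section Counting.
Variable G : plane_graph.
Hypothesis simpleG : simple_graph G.
Hypothesis connG : two_connected G.
Local Open Scope ring_scope.

Lemma sum_bounded_len :
  \sum_(p : face G | bounded p) ((flen p)%:Z - 2) = 2 * #|vertex G|%:Z - (Vinf G)%:Z - 2.
Proof.
have len : (\sum_(p : face G | bounded p) flen p + Vinf G = #|dart G|)%N.
  by rewrite -(flen_outer simpleG connG) -(sum_flen G) [in RHS](bigD1 (outer G)) //= addnC.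
have two : (\sum_(p : face G | bounded p) 2 + 2 = 2 * #|face G|)%N.
  have all2 : (\sum_(p : face G) 2 = 2 * #|face G|)%N by rewrite sum_nat_const mulnC.
  by rewrite -all2 [in RHS](bigD1 (outer G)) //= addnC.
rewrite sumrB (sum_Posz _ (@flen G)) (sum_Posz _ (fun=> 2%N)).
have := euler G; have := card_dart G; lia.
Qed.

(* How far b is from its least admissible value on a vertex: 0 on the outer
   face, -1 elsewhere. *)
Definition excess (b : vertex G -> int) (w : vertex G) : int :=
  b w + 1 - Posz (on_face w (outer G)).

Lemma Bval_excess (a : face G -> int) (b : vertex G -> int) :
  (forall p, bounded p -> a p = 1) ->
  Bval a b = (Vinf G)%:Z - 2 + 2 * \sum_w excess b w.
Proof.
move=> a1; rewrite /Bval (eq_bigr (fun p => (flen p)%:Z - 2)) => [|p bp]; last first.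
  by rewrite a1 // mulr1.
rewrite sum_bounded_len /excess sumrB big_split /= (sum_Posz _ (fun=> 1%N)).
rewrite (sum_Posz _ (fun w => nat_of_bool (on_face w (outer G)))) sum1_card.
have -> : (\sum_(w : vertex G) on_face w (outer G))%N = Vinf G.
  by rewrite /Vinf -sum1dep_card [RHS]big_mkcond; apply: eq_bigr => w _; case: on_face.
ring.
Qed.

Lemma excess_ge0 (b : vertex G -> int) (w : vertex G) :
  (on_face w (outer G) -> 0 <= b w) -> -1 <= b w -> 0 <= excess b w.
Proof. by rewrite /excess; case: on_face => /= [/(_ isT)|_]; lia. Qed.

Lemma sum_excess_eq0 (b : vertex G -> int) : (forall w, 0 <= excess b w) ->
  \sum_w excess b w = 0 <->
  (forall w, on_face w (outer G) -> b w = 0) /\ (forall w, ~~ on_face w (outer G) -> b w = -1).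
Proof.
move=> ex_ge; split=> [/(psumr_eq0P (fun w _ => ex_ge w)) ex0|[on off]].
  split=> w; have := ex0 w isT; rewrite /excess; first by move=> + on_w; rewrite on_w /=; lia.
  by move=> + off_w; rewrite (negbTE off_w) /=; lia.
rewrite big1 // => w _; rewrite /excess.
by case: (boolP (on_face w (outer G))) => [/on|/off] ->.
Qed.
End Counting.

Unset Implicit Arguments.
Local Open Scope ring_scope.

Theorem lemma4p2 (G : plane_graph) (a : face G -> int) (b : vertex G -> int) :
  simple_graph G -> two_connected G -> admissible a b ->
  (exists (p : face G) (v v' : vertex G),
      bounded p /\ adj v v' /\ edge_on v v' p /\ edge_on v v' (outer G) /\
      b v = 0 /\ b v' = 0 /\
      (b v - bface b p) * (b v' - bface b p) = 1) ->
  (forall p' : face G, bounded p' -> a p' + bface b p' = 0) ->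
  (forall (p' : face G) (v1 v2 : vertex G), bounded p' -> adj v1 v2 ->
      edge_on v1 v2 p' -> ~~ edge_on v1 v2 (outer G) ->
      (b v1 - bface b p') * (b v2 - bface b p') = 0) ->
  [/\ (forall w : vertex G, -1 <= b w),
      (forall p' : face G, bounded p' -> a p' = 1),
      (Vinf G)%:Z - 2 <= Bval a b &
      (Bval a b = (Vinf G)%:Z - 2 <->
       [/\ (forall w, on_face w (outer G) -> b w = 0),
           (forall w, ~~ on_face w (outer G) -> b w = -1) &
           (forall p' : face G, bounded p' -> a p' = 1)])].
Proof.
move=> simpleG connG [_ b_outer] [p0 [v [v' [bp0 [_ [on_p0 [_ [bv [bv' cond_p0]]]]]]]]]
  a_cond edge_cond.
have [d0 [fd0 vd0]] : exists d : dart G, fc d = p0 /\ b (vert d) = 0.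
  by case/existsP: on_p0 => d /andP[/eqP fd /orP[] /andP[/eqP dv _]]; exists d; rewrite dv.
have t0 : tight b (fc d0).
  rewrite /tight fd0 bp0 /=; apply/eqP.
  have : bface b p0 <= 0 by rewrite -vd0 -fd0 bface_le ?on_face_dart.
  move: cond_p0; rewrite bv bv' sub0r mulrNN; nia.
have tight_all := all_tight simpleG connG edge_cond t0.
have a1 p : bounded p -> a p = 1.
  by move=> bp; have := a_cond p bp; case/andP: (tight_all p bp) => _ /eqP ->; lia.
have b_ge w : -1 <= b w.
  have [d [<- bd]] := bounded_face_at simpleG connG w.
  by case/andP: (tight_all _ bd) => _ /eqP <-; rewrite bface_le ?on_face_dart.
have excess_ge w : 0 <= excess b w by apply: excess_ge0 (b_outer w) (b_ge w).
have sum_ge : 0 <= \sum_w excess b w by apply: sumr_ge0 => w _.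
rewrite (Bval_excess simpleG connG b a1); split=> //; first lia.
split=> [eqB|[on off _]].
  have /(sum_excess_eq0 excess_ge)[on off] : \sum_w excess b w = 0 by lia.
  by split.
by rewrite (proj2 (sum_excess_eq0 excess_ge) (conj on off)) mulr0 addr0.
Qed.
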